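(* Let $S$ be a training set of examples $(\mathbf{x},y)$ with $\mathbf{x}\in[-1,1]^d$, $y\in\{1,\dots,k\}$, and let $\epsilon>0$, $c>0$, $r\in\mathbb{N}$. Assume there exists $W^\star\in\mathbb{R}^{k\times d}$ with $L(W^\star)\le\epsilon$, all entries of $W^\star$ in $[-c,c]$, and $\|W^\star\|_{\infty,0}=r$. Then ShareBoost, run for $T=\lceil 4r^2c^2/\epsilon\rceil$ iterations, outputs a matrix $W$ with $L(W)\le 2\epsilon$ and $\|W\|_{\infty,0}\le \lceil 4r^2c^2/\epsilon\rceil$.
   Context: For $W\in\mathbb{R}^{k\times d}$, $W_{\cdot,i}$ denotes its $i$-th column and $\|W\|_{\infty,0}=|\{i:\|W_{\cdot,i}\|_\infty>0\}|$. The loss of $W$ on $(\mathbf{x},y)$ is $\ell(W,(\mathbf{x},y))=\ln\sum_{y'\in\{1,\dots,k\}}\exp\big(\mathbf{1}[y'\neq y]-(W\mathbf{x})_y+(W\mathbf{x})_{y'}\big)$, and $L(W)=\frac1{|S|}\sum_{(\mathbf{x},y)\in S}\ell(W,(\mathbf{x},y))$. Write $\nabla_r L(W)\in\mathbb{R}^k$ for the $r$-th column of $\nabla L(W)$. The ShareBoost algorithm: initialize $W=0$, $I=\emptyset$; for $t=1,\dots,T$: choose $r\in\{1,\dots,d\}$ maximizing $\|\nabla_r L(W)\|_1$ (ties broken arbitrarily), set $I\leftarrow I\cup\{r\}$, and set $W\leftarrow\arg\min\{L(V): V_{\cdot,i}=0\text{ for all }i\notin I\}$ (a minimizer is assumed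 to be attained at every iteration). *)

From Stdlib Require Import Reals List Arith Bool ZArith.
Import ListNotations.
Open Scope R_scope.

(* A k x d real matrix is a function row -> column -> R; only entries with
   row < k and column < d are meaningful.  Indices are 0-based:
   rows (labels) 0..k-1, columns (features) 0..d-1. *)
Definition mat := nat -> nat -> R.
Definition vec := nat -> R.
Definition example := (vec * nat)%type.

Definition sumR (n : nat) (f : nat -> R) : R :=
  fold_right Rplus 0 (map f (seq 0 n)).

Definition matvec (d : nat) (W : mat) (x : vec) (j : nat) : R :=
  sumR d (fun i => W j i * x i).

Definition indic_neq (a b : nat) : R := if Nat.eqb a b then 0 else 1.

Definition loss (k d : nat) (W : mat) (e : example) : R :=
  let (x, y) := e in
  ln (sumR k (fun y' =>
        exp (indic_neq y' y - matvec d W x y + matvec d W x y'))).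

Definition Lrisk (k d : nat) (S : list example) (W : mat) : R :=
  / INR (length S) * fold_right Rplus 0 (map (loss k d W) S).

Definition col_nonzero (k : nat) (W : mat) (i : nat) : bool :=
  existsb (fun j => if Req_EM_T (W j i) 0 then false else true) (seq 0 k).

Definition norm_inf0 (k d : nat) (W : mat) : nat :=
  length (filter (col_nonzero k W) (seq 0 d)).

Definition perturb (W : mat) (j i : nat) (t : R) : mat :=
  fun a b => W a b + (if Nat.eqb a j && Nat.eqb b i then t else 0).

Definition is_gradient (k d : nat) (F : mat -> R) (W : mat) (G : mat) : Prop :=
  forall j i, (j < k)%nat -> (i < d)%nat ->
    derivable_pt_lim (fun t => F (perturb W j i t)) 0 (G j i).

Definition col_l1 (k : nat) (G : mat) (r : nat) : R :=
  sumR k (fun j => Rabs (G j r)).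

Definition in_I (rs : nat -> nat) (t i : nat) : Prop :=
  exists s, (1 <= s)%nat /\ (s <= t)%nat /\ rs s = i.

Definition supported_on (rs : nat -> nat) (t : nat) (V : mat) : Prop :=
  forall j i, ~ in_I rs t i -> V j i = 0.

(* A run of ShareBoost for T iterations: Ws t is W after iteration t
   (Ws 0 = 0), rs t is the column chosen at iteration t (ties arbitrary,
   any minimizer allowed). *)
Definition shareboost_run (k d : nat) (S : list example) (T : nat)
    (Ws : nat -> mat) (rs : nat -> nat) : Prop :=
  (forall j i, Ws 0%nat j i = 0) /\
  forall t, (1 <= t)%nat -> (t <= T)%nat ->
    (rs t < d)%nat /\
    (exists G, is_gradient k d (Lrisk k d S) (Ws (t - 1)%nat) G /\
       forall r', (r' < d)%nat -> col_l1 k G r' <= col_l1 k G (rs t)) /\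
    supported_on rs t (Ws t) /\
    (forall V, supported_on rs t V -> Lrisk k d S (Ws t) <= Lrisk k d S V).

(* ceiling of a real, as a natural number (for nonnegative arguments) *)
Definition ceil_nat (x : R) : nat := Z.to_nat (- Int_part (- x)).

From Stdlib Require Import Reals List Bool ZArith Lra Lia Psatz FunctionalExtensionality Classical.
From Coquelicot Require Import Coquelicot.
Open Scope R_scope.

(* The risk L is a mean of log-sum-exp functions of linear maps of W, so
   along any line W + s D it is convex, and along a direction supported on
   a single column with entries in [-1, 1] it is 1-smooth:
   L(W + s D) <= L(W) + s L'(W; D) + s^2 for s in [0, 1].  Directional
   derivatives are inner products with the gradient.  Consequently:
   - a minimizer over the columns I_t has zero gradient on I_t;
   - opening the greedy column and moving against the gradient signs
     decreases the risk by M^2/4, where M is the l1-norm of that column;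
   - by convexity, L(W_t) - L(Wstar) <= r c M, since the gradient vanishes
     wherever W_t is nonzero and M is the largest column l1-norm.
   The resulting recursion delta_{t+1} <= delta_t - delta_t^2 / (4 r^2 c^2)
   gives delta_T <= 4 r^2 c^2 / T <= eps, while W_T uses only the T chosen
   columns. *)

Lemma ln_le_sub1 x : 0 < x -> ln x <= x - 1.
Proof. intros Hx. pose proof (exp_ineq1_le (ln x)). rewrite exp_ln in H; lra. Qed.

Lemma ln_le_compat x y : 0 < x -> x <= y -> ln x <= ln y.
Proof.
  intros Hx [Hlt|<-]; [left; apply ln_increasing; lra | lra].
Qed.

(* The quadratic upper bound on exp, proved by showing that
   (1 + z + z^2) exp (-z) has its minimum 1 at z = 0 on (-oo, 1]. *)
Lemma exp_le_quadratic z : z <= 1 -> exp z <= 1 + z + z ^ 2.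
Proof.
  intros Hz.
  set (h := fun x => (1 + x + x ^ 2) * exp (- x)).
  assert (Hd : forall x, is_derive h x ((x - x ^ 2) * exp (- x))).
  { intros x. unfold h. auto_derive; [auto | ring]. }
  destruct (MVT_gen h 0 z (fun x => (x - x ^ 2) * exp (- x))) as [c [Hc Hmvt]].
  - intros x _. apply Hd.
  - intros x _. apply derivable_continuous_pt. exists ((x - x ^ 2) * exp (- x)).
    apply is_derive_Reals, Hd.
  - assert (Hcz : 0 <= c * z /\ c <= 1).
    { revert Hc. unfold Rmin, Rmax. destruct (Rle_dec 0 z); intros; split; nra. }
    assert (Hh0 : h 0 = 1) by (unfold h; rewrite Ropp_0, exp_0; ring).
    assert (Hgrow : 1 <= h z).
    { pose proof (exp_pos (- c)).
      assert (0 <= c * z * (1 - c) * exp (- c)) by (apply Rmult_le_pos; [|lra]; nra).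
      assert (h z - h 0 = c * z * (1 - c) * exp (- c)) by (rewrite Hmvt; ring).
      lra. }
    unfold h in Hgrow. rewrite exp_Ropp in Hgrow. pose proof (exp_pos z).
    apply (Rmult_le_compat_r (exp z)) in Hgrow; [|lra].
    rewrite Rmult_assoc, Rinv_l in Hgrow; lra.
Qed.

Definition sumL {A : Type} (l : list A) (f : A -> R) : R := fold_right Rplus 0 (map f l).

Section ListSums.
Context {A : Type}.
Implicit Types (l : list A) (f g : A -> R).

Lemma sumL_cons x l f : sumL (x :: l) f = f x + sumL l f.
Proof. reflexivity. Qed.

Lemma sumL_ext l f g : (forall x, In x l -> f x = g x) -> sumL l f = sumL l g.
Proof.
  induction l as [|x l IH]; intros H; [reflexivity|].
  rewrite !sumL_cons, H, IH; [reflexivity| |left; reflexivity].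
  intros; apply H; right; assumption.
Qed.

Lemma sumL_plus l f g : sumL l (fun x => f x + g x) = sumL l f + sumL l g.
Proof. induction l as [|x l IH]; [cbn; ring|]. rewrite !sumL_cons, IH; ring. Qed.

Lemma sumL_scal l a f : sumL l (fun x => a * f x) = a * sumL l f.
Proof. induction l as [|x l IH]; [cbn; ring|]. rewrite !sumL_cons, IH; ring. Qed.

Lemma sumL_le l f g : (forall x, In x l -> f x <= g x) -> sumL l f <= sumL l g.
Proof.
  induction l as [|x l IH]; intros H; [cbn; lra|]. rewrite !sumL_cons.
  apply Rplus_le_compat; [apply H; left; auto | apply IH; intros; apply H; right; auto].
Qed.

Lemma sumL_abs l f : Rabs (sumL l f) <= sumL l (fun x => Rabs (f x)).
Proof.
  induction l as [|x l IH]; [cbn; rewrite Rabs_R0; lra|]. rewrite !sumL_cons.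
  eapply Rle_trans; [apply Rabs_triang|]. lra.
Qed.

Lemma sumL_zero l f : (forall x, In x l -> f x = 0) -> sumL l f = 0.
Proof.
  intros H. transitivity (sumL l (fun _ => 0 * 0)).
  - apply sumL_ext. intros x Hx. rewrite H; auto; ring.
  - rewrite sumL_scal. ring.
Qed.

Lemma sumL_nonneg l f : (forall x, In x l -> 0 <= f x) -> 0 <= sumL l f.
Proof. intros H. rewrite <- (sumL_zero l (fun _ => 0)) by auto. now apply sumL_le. Qed.

Lemma sumL_pos l f : l <> nil -> (forall x, In x l -> 0 < f x) -> 0 < sumL l f.
Proof.
  destruct l as [|x l]; intros Hnil H; [congruence|]. rewrite sumL_cons.
  pose proof (H x (or_introl eq_refl)).
  assert (0 <= sumL l f) by (apply sumL_nonneg; intros; left; apply H; right; auto).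
  lra.
Qed.

Lemma sumL_count l (b : A -> bool) a :
  sumL l (fun x => if b x then a else 0) = a * INR (length (filter b l)).
Proof.
  induction l as [|x l IH]; [cbn; ring|]. rewrite sumL_cons, IH. simpl.
  destruct (b x); simpl length; try rewrite S_INR; ring.
Qed.

Lemma sumL_const l a : sumL l (fun _ => a) = a * INR (length l).
Proof.
  induction l as [|x l IH]; [cbn; ring|].
  rewrite sumL_cons, IH. simpl length. rewrite S_INR. ring.
Qed.
End ListSums.

Lemma sumL_single (l : list nat) f c :
  NoDup l -> In c l -> (forall x, In x l -> x <> c -> f x = 0) -> sumL l f = f c.
Proof.
  induction l as [|x l IH]; intros Hnd Hin H; [destruct Hin|].
  inversion Hnd; subst. rewrite sumL_cons. destruct Hin as [->|Hin].
  - rewrite sumL_zero; [ring|]. intros y Hy. apply H; [right; auto|]. intros ->. contradiction.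
  - rewrite IH, H; auto; [ring| left; auto | |].
    + intros ->. contradiction.
    + intros; apply H; [right|]; auto.
Qed.

Lemma sumL_seq_single n f c :
  (c < n)%nat -> (forall x, x <> c -> f x = 0) -> sumL (seq 0 n) f = f c.
Proof. intros Hc H. apply sumL_single; auto using seq_NoDup. apply in_seq; lia. Qed.

Lemma sumR_sumL n f : sumR n f = sumL (seq 0 n) f.
Proof. reflexivity. Qed.

Lemma derivable_pt_lim_ext f g x l :
  (forall y, f y = g y) -> derivable_pt_lim f x l -> derivable_pt_lim g x l.
Proof. intros H. replace g with f; [auto|]. now apply functional_extensionality. Qed.

Lemma sumL_derive {A : Type} (l : list A) (F : A -> R -> R) (F' : A -> R) x :
  (forall y, In y l -> derivable_pt_lim (F y) x (F' y)) ->
  derivable_pt_lim (fun s => sumL l (fun y => F y s)) x (sumL l F').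
Proof.
  induction l as [|y l IH]; intros HF.
  - apply (derivable_pt_lim_ext (fct_cte 0)); [reflexivity|]. apply derivable_pt_lim_const.
  - apply (derivable_pt_lim_ext (F y + (fun s => sumL l (fun y => F y s)))%F); [reflexivity|].
    apply derivable_pt_lim_plus; [apply HF; left; reflexivity|].
    apply IH. intros; apply HF; right; assumption.
Qed.

Section LogSumExp.
Variable l : list nat.
Hypothesis l_nonnil : l <> nil.
Variables a b : nat -> R.

Let Z s := sumL l (fun y => exp (a y + s * b y)).
Let mean := sumL l (fun y => exp (a y) * b y) / sumL l (fun y => exp (a y)).

Lemma lse_Z0 : Z 0 = sumL l (fun y => exp (a y)).
Proof. apply sumL_ext. intros y _. f_equal. ring. Qed.

Lemma lse_Z_pos s : 0 < Z s.
Proof. apply sumL_pos; auto. intros; apply exp_pos. Qed.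

Lemma lse_Z_derive x :
  derivable_pt_lim Z x (sumL l (fun y => exp (a y + x * b y) * b y)).
Proof.
  apply (sumL_derive l (fun y s => exp (a y + s * b y))). intros y _.
  apply is_derive_Reals. auto_derive; [auto | ring].
Qed.

Lemma lse_derive : derivable_pt_lim (fun s => ln (Z s)) 0 mean.
Proof.
  pose proof (derivable_pt_lim_comp Z ln 0 _ _ (lse_Z_derive 0)
                (derivable_pt_lim_ln (Z 0) (lse_Z_pos 0))) as D.
  rewrite lse_Z0 in D. unfold mean, Rdiv. rewrite Rmult_comm.
  replace (sumL l (fun y => exp (a y) * b y))
    with (sumL l (fun y => exp (a y + 0 * b y) * b y)); [exact D|].
  apply sumL_ext. intros. do 2 f_equal. ring.
Qed.

Lemma lse_Z0_pos : 0 < sumL l (fun y => exp (a y)).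
Proof. rewrite <- lse_Z0. apply lse_Z_pos. Qed.

Lemma lse_Z_tilt beta s :
  Z s = exp (s * beta) * sumL l (fun y => exp (a y) * exp (s * (b y - beta))).
Proof.
  rewrite <- sumL_scal. apply sumL_ext. intros y _.
  rewrite <- !exp_plus. f_equal. ring.
Qed.

Lemma lse_moment beta s q :
  sumL l (fun y => exp (a y) * (1 + s * (b y - beta) + q))
  = sumL l (fun y => exp (a y)) * (1 + s * (mean - beta) + q).
Proof.
  pose proof lse_Z0_pos. unfold mean.
  transitivity (sumL l (fun y => (1 - s * beta + q) * exp (a y) + s * (exp (a y) * b y))).
  - apply sumL_ext. intros; ring.
  - rewrite sumL_plus, !sumL_scal. field. lra.
Qed.

(* Convexity: the value at s = 1 lies above the tangent line at 0. *)
Lemma lse_convex : ln (sumL l (fun y => exp (a y))) + mean <= ln (Z 1).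
Proof.
  pose proof lse_Z0_pos as HZ0.
  assert (Hle : exp mean * Z 0 <= Z 1).
  { rewrite (lse_Z_tilt mean 1), Rmult_1_l, lse_Z0.
    apply Rmult_le_compat_l; [left; apply exp_pos|].
    replace (sumL l (fun y => exp (a y)))
      with (sumL l (fun y => exp (a y) * (1 + 1 * (b y - mean) + 0)))
      by (rewrite lse_moment; ring).
    apply sumL_le. intros y _.
    apply Rmult_le_compat_l; [left; apply exp_pos|].
    pose proof (exp_ineq1_le (1 * (b y - mean))). lra. }
  rewrite lse_Z0 in Hle.
  apply ln_le_compat in Hle; [|apply Rmult_lt_0_compat; auto using exp_pos].
  rewrite ln_mult, ln_exp in Hle; auto using exp_pos. lra.
Qed.

Lemma lse_smooth beta s :
  (forall y, In y l -> Rabs (b y - beta) <= 1) -> 0 <= s <= 1 ->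
  ln (Z s) <= ln (sumL l (fun y => exp (a y))) + s * mean + s ^ 2.
Proof.
  intros Hb Hs. pose proof lse_Z0_pos as HZ0.
  set (Q := 1 + s * (mean - beta) + s ^ 2).
  assert (Hle : Z s <= exp (s * beta) * (sumL l (fun y => exp (a y)) * Q)).
  { rewrite (lse_Z_tilt beta s). unfold Q. rewrite <- lse_moment.
    apply Rmult_le_compat_l; [left; apply exp_pos|].
    apply sumL_le. intros y Hy.
    apply Rmult_le_compat_l; [left; apply exp_pos|].
    specialize (Hb y Hy). apply Rabs_le_between in Hb.
    assert (Hsq : (s * (b y - beta)) ^ 2 <= s ^ 2).
    { rewrite Rpow_mult_distr. assert ((b y - beta) ^ 2 <= 1) by nra.
      pose proof (pow2_ge_0 s). nra. }
    pose proof (exp_le_quadratic (s * (b y - beta)) ltac:(nra)). lra. }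
  assert (HQ : 0 < Q).
  { pose proof (lse_Z_pos s). pose proof (exp_pos (s * beta)).
    destruct (Rlt_dec 0 Q) as [|HQ]; [auto|]. exfalso.
    assert (sumL l (fun y => exp (a y)) * Q <= 0) by nra. nra. }
  apply ln_le_compat in Hle; [|apply lse_Z_pos].
  rewrite ln_mult, ln_exp, ln_mult in Hle; auto using exp_pos.
  pose proof (ln_le_sub1 Q HQ). unfold Q in *. lra.
  apply Rmult_lt_0_compat; auto.
Qed.

(* The slope is a weighted mean of the b y, hence bounded like them. *)
Lemma lse_mean_bound B : (forall y, In y l -> Rabs (b y) <= B) -> Rabs mean <= B.
Proof.
  intros Hb. pose proof lse_Z0_pos as HZ0. unfold mean.
  unfold Rdiv. rewrite Rabs_mult, Rabs_inv, (Rabs_right (sumL l (fun y => exp (a y)))) by lra.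
  fold (Rdiv (Rabs (sumL l (fun y => exp (a y) * b y))) (sumL l (fun y => exp (a y)))).
  apply Rle_div_l; [lra|].
  eapply Rle_trans; [apply sumL_abs|]. rewrite <- sumL_scal.
  apply sumL_le. intros y Hy. rewrite Rabs_mult, Rabs_right by (left; apply exp_pos).
  pose proof (exp_pos (a y)). specialize (Hb y Hy). nra.
Qed.
End LogSumExp.

(* The exponent of label y' in the loss of W on e, and its rate of change
   when W moves in the direction D. *)
Definition margin (d : nat) (W : mat) (e : example) (y' : nat) : R :=
  indic_neq y' (snd e) - matvec d W (fst e) (snd e) + matvec d W (fst e) y'.
Definition margin_slope (d : nat) (D : mat) (e : example) (y' : nat) : R :=
  matvec d D (fst e) y' - matvec d D (fst e) (snd e).

Definition mline (W D : mat) (s : R) : mat := fun a b => W a b + s * D a b.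

(* Directional derivative of the loss on e, and of the risk, at W along D. *)
Definition dloss (k d : nat) (W D : mat) (e : example) : R :=
  sumL (seq 0 k) (fun y => exp (margin d W e y) * margin_slope d D e y)
  / sumL (seq 0 k) (fun y => exp (margin d W e y)).
Definition drisk (k d : nat) (S : list example) (W D : mat) : R :=
  / INR (length S) * sumL S (dloss k d W D).

Lemma Lrisk_sumL k d S W : Lrisk k d S W = / INR (length S) * sumL S (loss k d W).
Proof. reflexivity. Qed.

(* The normalization 1/|S| (which is 0 for the empty sample). *)
Lemma inv_INR_nonneg n : 0 <= / INR n.
Proof.
  destruct n as [|n]; [simpl; rewrite Rinv_0; lra|].
  left. apply Rinv_0_lt_compat, lt_0_INR. lia.
Qed.

Lemma inv_INR_mul_le n : / INR n * INR n <= 1.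
Proof. destruct n as [|n]; [simpl; rewrite Rinv_0; lra|]. rewrite Rinv_l; [lra|]. apply not_0_INR. lia. Qed.

Lemma matvec_mline d W D s x j :
  matvec d (mline W D s) x j = matvec d W x j + s * matvec d D x j.
Proof.
  unfold matvec. rewrite !sumR_sumL, <- sumL_scal, <- sumL_plus. apply sumL_ext. intros; unfold mline; ring.
Qed.

Lemma loss_margin k d W e :
  loss k d W e = ln (sumL (seq 0 k) (fun y => exp (margin d W e y))).
Proof. destruct e. reflexivity. Qed.

Lemma loss_mline k d W D s e :
  loss k d (mline W D s) e
  = ln (sumL (seq 0 k) (fun y => exp (margin d W e y + s * margin_slope d D e y))).
Proof.
  rewrite loss_margin. f_equal. apply sumL_ext. intros. f_equal.
  unfold margin, margin_slope. rewrite !matvec_mline. ring.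
Qed.

Section RiskAlongLines.
Variables (k d : nat) (S : list example).
Hypothesis k_pos : (0 < k)%nat.

Let labels_nonnil : seq 0 k <> nil.
Proof. destruct k; simpl; [lia | congruence]. Qed.

Lemma Lrisk_derive W D :
  derivable_pt_lim (fun s => Lrisk k d S (mline W D s)) 0 (drisk k d S W D).
Proof.
  assert (Hsum : derivable_pt_lim (fun s => sumL S (loss k d (mline W D s))) 0
                   (sumL S (dloss k d W D))).
  { apply (sumL_derive S (fun e s => loss k d (mline W D s) e)). intros e _.
    apply (derivable_pt_lim_ext _ _ _ _ (fun s => eq_sym (loss_mline k d W D s e))).
    apply (lse_derive (seq 0 k) labels_nonnil). }
  apply (derivable_pt_lim_ext
           (mult_real_fct (/ INR (length S)) (fun s => sumL S (loss k d (mline W D s)))));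
    [reflexivity|].
  apply derivable_pt_lim_scal, Hsum.
Qed.

Lemma Lrisk_convex W D : Lrisk k d S W + drisk k d S W D <= Lrisk k d S (mline W D 1).
Proof.
  rewrite !Lrisk_sumL. unfold drisk. rewrite <- Rmult_plus_distr_l.
  apply Rmult_le_compat_l; [apply inv_INR_nonneg|].
  rewrite <- sumL_plus. apply sumL_le. intros e _. rewrite loss_mline, loss_margin.
  apply (lse_convex (seq 0 k) labels_nonnil).
Qed.

Lemma Lrisk_smooth W D s :
  (forall e, In e S -> exists beta, forall y, In y (seq 0 k) ->
     Rabs (margin_slope d D e y - beta) <= 1) ->
  0 <= s <= 1 ->
  Lrisk k d S (mline W D s) <= Lrisk k d S W + s * drisk k d S W D + s ^ 2.
Proof.
  intros Hb Hs. rewrite !Lrisk_sumL. unfold drisk.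
  assert (H : sumL S (loss k d (mline W D s))
              <= sumL S (loss k d W) + s * sumL S (dloss k d W D) + s ^ 2 * INR (length S)).
  { rewrite <- sumL_const, <- sumL_scal, <- !sumL_plus. apply sumL_le. intros e He.
    rewrite loss_mline, loss_margin. destruct (Hb e He) as [beta Hbeta].
    apply (lse_smooth (seq 0 k) labels_nonnil _ _ beta s Hbeta Hs). }
  pose proof (inv_INR_nonneg (length S)). pose proof (inv_INR_mul_le (length S)).
  pose proof (pow2_ge_0 s).
  apply Rmult_le_compat_l with (r := / INR (length S)) in H; auto. nra.
Qed.

Lemma drisk_bound W D B :
  (forall e, In e S -> forall y, In y (seq 0 k) -> Rabs (margin_slope d D e y) <= B) ->
  0 <= B -> Rabs (drisk k d S W D) <= B.
Proof.
  intros Hb HB. unfold drisk.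
  rewrite Rabs_mult, (Rabs_right (/ _)) by (apply Rle_ge, inv_INR_nonneg).
  pose proof (inv_INR_nonneg (length S)). pose proof (inv_INR_mul_le (length S)).
  assert (Habs : Rabs (sumL S (dloss k d W D)) <= B * INR (length S)).
  { rewrite <- sumL_const. eapply Rle_trans; [apply sumL_abs|].
    apply sumL_le. intros e He. apply (lse_mean_bound (seq 0 k) labels_nonnil). auto. }
  nra.
Qed.
End RiskAlongLines.

Definition unit_mat (j i : nat) : mat :=
  fun a b => if Nat.eqb a j && Nat.eqb b i then 1 else 0.
Definition inner (k d : nat) (A B : mat) : R :=
  sumL (seq 0 d) (fun i => sumL (seq 0 k) (fun j => A j i * B j i)).

Lemma perturb_mline W j i t : perturb W j i t = mline W (unit_mat j i) t.
Proof.
  apply functional_extensionality; intro a; apply functional_extensionality; intro b.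
  unfold perturb, mline, unit_mat. destruct (Nat.eqb a j && Nat.eqb b i); ring.
Qed.

Lemma drisk_lin k d S W u v D1 D2 :
  drisk k d S W (fun a b => u * D1 a b + v * D2 a b)
  = u * drisk k d S W D1 + v * drisk k d S W D2.
Proof.
  assert (Hmv : forall x j, matvec d (fun a b => u * D1 a b + v * D2 a b) x j
            = u * matvec d D1 x j + v * matvec d D2 x j).
  { intros x j. unfold matvec. rewrite !sumR_sumL, <- !sumL_scal, <- sumL_plus.
    apply sumL_ext. intros; ring. }
  assert (Hnum : forall e, sumL (seq 0 k) (fun y => exp (margin d W e y)
              * margin_slope d (fun a b => u * D1 a b + v * D2 a b) e y)
            = u * sumL (seq 0 k) (fun y => exp (margin d W e y) * margin_slope d D1 e y)
              + v * sumL (seq 0 k) (fun y => exp (margin d W e y) * margin_slope d D2 e y)).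
  { intros e. rewrite <- !sumL_scal, <- sumL_plus. apply sumL_ext. intros y _.
    unfold margin_slope. rewrite !Hmv. ring. }
  unfold drisk. rewrite (sumL_ext S _ (fun e => u * dloss k d W D1 e + v * dloss k d W D2 e)).
  - rewrite sumL_plus, !sumL_scal. ring.
  - intros e _. unfold dloss. rewrite Hnum. unfold Rdiv. ring.
Qed.

Lemma drisk_ext k d S W D1 D2 :
  (forall a b, D1 a b = D2 a b) -> drisk k d S W D1 = drisk k d S W D2.
Proof.
  intros H. f_equal. apply functional_extensionality; intro a; apply functional_extensionality; auto.
Qed.

Lemma drisk_sum k d S W (l : list nat) (F : nat -> mat) :
  drisk k d S W (fun a b => sumL l (fun x => F x a b)) = sumL l (fun x => drisk k d S W (F x)).
Proof.
  induction l as [|x l IH].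
  - rewrite (drisk_ext _ _ _ _ _ (fun a b => 0 * F 0%nat a b + 0 * F 0%nat a b)).
    + rewrite drisk_lin. cbn. ring.
    + intros. cbn. ring.
  - rewrite sumL_cons, <- IH.
    transitivity (drisk k d S W (fun a b => 1 * F x a b + 1 * sumL l (fun x => F x a b))).
    + apply drisk_ext. intros. rewrite sumL_cons. ring.
    + rewrite drisk_lin. ring.
Qed.

Lemma drisk_scale k d S W u D : drisk k d S W (fun a b => u * D a b) = u * drisk k d S W D.
Proof.
  rewrite (drisk_ext _ _ _ _ _ (fun a b => u * D a b + 0 * D a b)), drisk_lin; [ring|].
  intros; ring.
Qed.

Section Gradient.
Variables (k d : nat) (S : list example).
Hypothesis k_pos : (0 < k)%nat.
Hypothesis labels_lt : forall e, In e S -> (snd e < k)%nat.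

Lemma matvec_block D1 D2 x y :
  (forall b, (b < d)%nat -> D1 y b = D2 y b) -> matvec d D1 x y = matvec d D2 x y.
Proof.
  intros H. unfold matvec. rewrite !sumR_sumL. apply sumL_ext.
  intros i Hi. apply in_seq in Hi. rewrite H; [reflexivity | lia].
Qed.

(* Only the k x d block of a matrix influences the risk and its derivatives,
   since all labels are below k. *)
Lemma Lrisk_block W1 W2 :
  (forall a b, (a < k)%nat -> (b < d)%nat -> W1 a b = W2 a b) ->
  Lrisk k d S W1 = Lrisk k d S W2.
Proof.
  intros H. rewrite !Lrisk_sumL. f_equal. apply sumL_ext. intros e He.
  rewrite !loss_margin. f_equal. apply sumL_ext. intros y Hy. apply in_seq in Hy.
  pose proof (labels_lt e He). unfold margin.
  rewrite (matvec_block W1 W2 _ y), (matvec_block W1 W2 _ (snd e));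
    auto; intros; apply H; lia.
Qed.

Lemma drisk_block W D1 D2 :
  (forall a b, (a < k)%nat -> (b < d)%nat -> D1 a b = D2 a b) ->
  drisk k d S W D1 = drisk k d S W D2.
Proof.
  intros H. unfold drisk. f_equal. apply sumL_ext. intros e He. unfold dloss. f_equal.
  apply sumL_ext. intros y Hy. apply in_seq in Hy. pose proof (labels_lt e He).
  unfold margin_slope.
  rewrite (matvec_block D1 D2 _ y), (matvec_block D1 D2 _ (snd e));
    auto; intros; apply H; lia.
Qed.

Lemma gradient_entry W G :
  is_gradient k d (Lrisk k d S) W G ->
  forall j i, (j < k)%nat -> (i < d)%nat -> G j i = drisk k d S W (unit_mat j i).
Proof.
  intros HG j i Hj Hi.
  apply (uniqueness_limite (fun s => Lrisk k d S (mline W (unit_mat j i) s)) 0).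
  - eapply derivable_pt_lim_ext; [|exact (HG j i Hj Hi)].
    intros. simpl. now rewrite perturb_mline.
  - apply Lrisk_derive; auto.
Qed.

Lemma drisk_inner W G D :
  is_gradient k d (Lrisk k d S) W G -> drisk k d S W D = inner k d D G.
Proof.
  intros HG.
  rewrite (drisk_block W D (fun a b => sumL (seq 0 d) (fun i =>
             sumL (seq 0 k) (fun j => D j i * unit_mat j i a b)))).
  - rewrite drisk_sum. apply sumL_ext. intros i Hi. rewrite drisk_sum.
    apply sumL_ext. intros j Hj. apply in_seq in Hi, Hj.
    rewrite drisk_scale, (gradient_entry W G HG j i); [reflexivity | lia | lia].
  - intros a b Ha Hb.
    rewrite (sumL_seq_single d _ b Hb), (sumL_seq_single k _ a Ha).
    + unfold unit_mat. rewrite !Nat.eqb_refl. simpl. ring.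
    + intros x Hx. unfold unit_mat.
      replace (Nat.eqb a x) with false by (symmetry; apply Nat.eqb_neq; auto). simpl. ring.
    + intros x Hx. apply sumL_zero. intros j _. unfold unit_mat.
      replace (Nat.eqb b x) with false by (symmetry; apply Nat.eqb_neq; auto).
      rewrite andb_false_r. ring.
Qed.
End Gradient.

Lemma col_nonzero_false k V i :
  col_nonzero k V i = false -> forall j, (j < k)%nat -> V j i = 0.
Proof.
  intros H j Hj. destruct (Req_EM_T (V j i) 0) as [E|E]; [exact E|]. exfalso.
  assert (Hex : col_nonzero k V i = true).
  { apply existsb_exists. exists j. split; [apply in_seq; lia|].
    destruct (Req_EM_T (V j i) 0); [contradiction | reflexivity]. }
  congruence.
Qed.

Lemma inner_bound k d V G c M :
  0 <= c ->
  (forall j i, (j < k)%nat -> (i < d)%nat -> Rabs (V j i) <= c) ->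
  (forall i, (i < d)%nat -> col_l1 k G i <= M) ->
  Rabs (inner k d V G) <= INR (norm_inf0 k d V) * (c * M).
Proof.
  intros Hc HV HG. unfold inner, norm_inf0. rewrite Rmult_comm, <- sumL_count.
  eapply Rle_trans; [apply sumL_abs|]. apply sumL_le. intros i Hi. apply in_seq in Hi.
  destruct (col_nonzero k V i) eqn:Ecol.
  - eapply Rle_trans; [apply sumL_abs|].
    apply Rle_trans with (sumL (seq 0 k) (fun j => c * Rabs (G j i))).
    + apply sumL_le. intros j Hj. apply in_seq in Hj. rewrite Rabs_mult.
      apply Rmult_le_compat_r; [apply Rabs_pos | apply HV; lia].
    + rewrite sumL_scal. apply Rmult_le_compat_l; [exact Hc|].
      specialize (HG i ltac:(lia)). unfold col_l1 in HG. rewrite sumR_sumL in HG. exact HG.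
  - rewrite sumL_zero, Rabs_R0; [lra|]. intros j Hj. apply in_seq in Hj.
    rewrite (col_nonzero_false k V i Ecol j); [ring | lia].
Qed.

Lemma in_I_0 rs i : ~ in_I rs 0 i.
Proof. intros [s [H1 [H2 _]]]. lia. Qed.

Lemma in_I_S rs t i : in_I rs t i -> in_I rs (S t) i.
Proof. intros [s [H1 [H2 H3]]]. exists s. repeat split; auto; lia. Qed.

Lemma in_I_new rs t : in_I rs (S t) (rs (S t)).
Proof. exists (S t). repeat split; lia. Qed.

Lemma supported_mline rs t W D s :
  supported_on rs t W -> supported_on rs t D -> supported_on rs t (mline W D s).
Proof. intros HW HD a b Hb. unfold mline. rewrite HW, HD; auto. ring. Qed.

Lemma nonneg_of_small_steps g : (forall s, 0 < s <= 1 -> 0 <= s * g + s ^ 2) -> 0 <= g.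
Proof.
  intros H. destruct (Rle_dec 0 g) as [|Hg]; [assumption|]. exfalso.
  set (s := Rmin 1 (- g / 2)).
  assert (Hs : 0 < s <= 1) by (split; [apply Rmin_pos; lra | apply Rmin_l]).
  assert (s <= - g / 2) by apply Rmin_r.
  specialize (H s Hs). nra.
Qed.

Section DescentSteps.
Variables (k d : nat) (S : list example).
Hypothesis k_pos : (0 < k)%nat.
Hypothesis HS : forall e, In e S ->
  (snd e < k)%nat /\ forall i, (i < d)%nat -> -1 <= fst e i <= 1.

Let labels_lt e : In e S -> (snd e < k)%nat.
Proof. intros He. apply (HS e He). Qed.

Definition column_dir (D : mat) (col : nat) : Prop :=
  (col < d)%nat /\ (forall a b, b <> col -> D a b = 0) /\ (forall a, Rabs (D a col) <= 1).

(* Along a column direction the margin slopes of an example all lie within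
   1 of a common value, and are bounded by 2, because |x_i| <= 1. *)
Lemma column_dir_slopes D col : column_dir D col -> forall e, In e S ->
  (exists beta, forall y, In y (seq 0 k) -> Rabs (margin_slope d D e y - beta) <= 1) /\
  (forall y, In y (seq 0 k) -> Rabs (margin_slope d D e y) <= 2).
Proof.
  intros [Hc [HD Hb]] e He. destruct (HS e He) as [Hy Hx]. specialize (Hx col Hc).
  assert (Hmv : forall a, matvec d D (fst e) a = D a col * fst e col).
  { intros a. unfold matvec. rewrite sumR_sumL.
    apply (sumL_seq_single d (fun i => D a i * fst e i) col Hc).
    intros b Hb'. rewrite HD; auto. ring. }
  assert (Hp : forall a, Rabs (D a col * fst e col) <= 1).
  { intros a. rewrite Rabs_mult. pose proof (Hb a).
    assert (Rabs (fst e col) <= 1) by (apply Rabs_le; lra).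
    pose proof (Rabs_pos (D a col)). pose proof (Rabs_pos (fst e col)). nra. }
  unfold margin_slope. split.
  - exists (- (D (snd e) col * fst e col)). intros y _. rewrite !Hmv.
    replace (D y col * fst e col - D (snd e) col * fst e col - - (D (snd e) col * fst e col))
      with (D y col * fst e col) by ring.
    apply Hp.
  - intros y _. rewrite !Hmv.
    pose proof (Hp y) as H1. pose proof (Hp (snd e)) as H2.
    apply Rabs_le_between in H1. apply Rabs_le_between in H2. apply Rabs_le. lra.
Qed.

Lemma Lrisk_column_step W D col s : column_dir D col -> 0 <= s <= 1 ->
  Lrisk k d S (mline W D s) <= Lrisk k d S W + s * drisk k d S W D + s ^ 2.
Proof.
  intros HD Hs. apply Lrisk_smooth; auto.
  intros e He. exact (proj1 (column_dir_slopes D col HD e He)).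
Qed.

Lemma drisk_column_bound W D col : column_dir D col -> Rabs (drisk k d S W D) <= 2.
Proof.
  intros HD. apply drisk_bound; [auto | | lra].
  intros e He. exact (proj2 (column_dir_slopes D col HD e He)).
Qed.

Lemma minimizer_gradient_zero W G rs t :
  is_gradient k d (Lrisk k d S) W G -> supported_on rs t W ->
  (forall V, supported_on rs t V -> Lrisk k d S W <= Lrisk k d S V) ->
  forall j i, (j < k)%nat -> (i < d)%nat -> in_I rs t i -> G j i = 0.
Proof.
  intros HG Hsup Hmin j i Hj Hi HI.
  assert (Hsign : forall u, Rabs u <= 1 -> 0 <= u * G j i).
  { intros u Hu. set (D := fun a b => u * unit_mat j i a b).
    assert (Hoff : forall a b, b <> i -> D a b = 0).
    { intros a b Hb. unfold D, unit_mat.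
      replace (Nat.eqb b i) with false by (symmetry; apply Nat.eqb_neq; auto).
      rewrite andb_false_r. ring. }
    assert (HD : column_dir D i).
    { split; [exact Hi | split; [exact Hoff|]]. intros a. unfold D, unit_mat.
      destruct (Nat.eqb a j && Nat.eqb i i); rewrite ?Rmult_1_r, ?Rmult_0_r, ?Rabs_R0; lra. }
    assert (Hdir : drisk k d S W D = u * G j i).
    { unfold D. rewrite drisk_scale, (gradient_entry k d S k_pos W G HG); auto. }
    apply nonneg_of_small_steps. intros s Hs.
    assert (Hstay : supported_on rs t (mline W D s)).
    { apply supported_mline; auto. intros a b Hb. apply Hoff. intros ->. contradiction. }
    pose proof (Hmin _ Hstay). pose proof (Lrisk_column_step W D i s HD ltac:(lra)).
    rewrite Hdir in *. lra. }
  pose proof (Hsign 1 ltac:(rewrite Rabs_R1; lra)).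
  pose proof (Hsign (-1) ltac:(rewrite Rabs_left; lra)).
  lra.
Qed.

Lemma column_progress W G rr :
  is_gradient k d (Lrisk k d S) W G -> (rr < d)%nat ->
  let M := col_l1 k G rr in
  exists D, (forall a b, b <> rr -> D a b = 0) /\
    Lrisk k d S (mline W D (M / 2)) <= Lrisk k d S W - M ^ 2 / 4.
Proof.
  intros HG Hrr M.
  set (D := fun a b => if Nat.eqb b rr then (if Rle_dec 0 (G a rr) then -1 else 1) else 0).
  assert (Hoff : forall a b, b <> rr -> D a b = 0).
  { intros a b Hb. unfold D. replace (Nat.eqb b rr) with false; [reflexivity|].
    symmetry. apply Nat.eqb_neq; auto. }
  assert (HD : column_dir D rr).
  { split; [exact Hrr | split; [exact Hoff|]]. intros a. unfold D. rewrite Nat.eqb_refl.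
    destruct (Rle_dec 0 (G a rr)); [rewrite Rabs_left | rewrite Rabs_R1]; lra. }
  assert (Hdir : drisk k d S W D = - M).
  { rewrite (drisk_inner k d S k_pos labels_lt W G D HG). unfold inner, M, col_l1.
    rewrite sumR_sumL, (sumL_seq_single d _ rr Hrr).
    - rewrite <- (Rmult_1_l (sumL _ (fun j => Rabs (G j rr)))), Ropp_mult_distr_l, <- sumL_scal.
      apply sumL_ext. intros j _. unfold D. rewrite Nat.eqb_refl.
      destruct (Rle_dec 0 (G j rr)); [rewrite Rabs_right | rewrite Rabs_left]; lra.
    - intros x Hx. apply sumL_zero. intros j _. rewrite Hoff; auto. ring. }
  assert (HM : 0 <= M <= 2).
  { split.
    - unfold M, col_l1. rewrite sumR_sumL. apply sumL_nonneg. intros; apply Rabs_pos.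
    - pose proof (drisk_column_bound W D rr HD) as Hb. rewrite Hdir, Rabs_Ropp in Hb.
      pose proof (Rle_abs M). lra. }
  exists D. split; [exact Hoff|].
  pose proof (Lrisk_column_step W D rr (M / 2) HD ltac:(lra)). rewrite Hdir in *. lra.
Qed.

Lemma suboptimality_gap W G Wstar c M :
  is_gradient k d (Lrisk k d S) W G -> 0 <= c ->
  (forall j i, (j < k)%nat -> (i < d)%nat -> W j i = 0 \/ G j i = 0) ->
  (forall j i, (j < k)%nat -> (i < d)%nat -> Rabs (Wstar j i) <= c) ->
  (forall i, (i < d)%nat -> col_l1 k G i <= M) ->
  Lrisk k d S W - Lrisk k d S Wstar <= INR (norm_inf0 k d Wstar) * (c * M).
Proof.
  intros HG Hc Horth Hstar HM.
  set (D := fun a b => Wstar a b - W a b).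
  pose proof (Lrisk_convex k d S k_pos W D) as Hcvx.
  replace (mline W D 1) with Wstar in Hcvx
    by (apply functional_extensionality; intro a; apply functional_extensionality; intro b;
        unfold mline, D; ring).
  assert (Hdir : drisk k d S W D = inner k d Wstar G).
  { rewrite (drisk_inner k d S k_pos labels_lt W G D HG). unfold inner.
    apply sumL_ext. intros i Hi. apply sumL_ext. intros j Hj. apply in_seq in Hi, Hj.
    unfold D. destruct (Horth j i) as [Hz|Hz]; try lia; rewrite Hz; ring. }
  pose proof (inner_bound k d Wstar G c M Hc Hstar HM).
  pose proof (Rle_abs (- inner k d Wstar G)). rewrite Rabs_Ropp in *. lra.
Qed.
End DescentSteps.

Lemma quad_step A x t : 0 < A -> 1 <= t -> 0 <= x <= A / t -> x - x ^ 2 / A <= A / (t + 1).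
Proof.
  intros HA Ht [Hx0 Hx1]. set (y := A / t) in *.
  assert (Ay : A = y * t) by (unfold y; field; lra).
  assert (Hy : 0 < y) by (unfold y; apply Rdiv_lt_0_compat; lra).
  assert (HP : 0 <= (t + 1) * x ^ 2 - (t + 1) * A * x + A ^ 2).
  { rewrite Ay. destruct (Rle_dec 2 t).
    - assert (E : (t + 1) * x ^ 2 - (t + 1) * (y * t) * x + (y * t) ^ 2
                  = (t + 1) * (y - x) * (y * t - y - x) + y ^ 2) by ring.
      rewrite E. assert (0 <= y * t - y - x) by nra. assert (0 <= (t + 1) * (y - x)) by nra. nra.
    - assert (E : (t + 1) * x ^ 2 - (t + 1) * (y * t) * x + (y * t) ^ 2
                  = (t + 1) * (x - y * t / 2) ^ 2 + (y * t) ^ 2 * (1 - (t + 1) / 4)) by field.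
      rewrite E. pose proof (pow2_ge_0 (x - y * t / 2)). pose proof (pow2_ge_0 (y * t)). nra. }
  assert (E : A / (t + 1) - (x - x ^ 2 / A)
              = ((t + 1) * x ^ 2 - (t + 1) * A * x + A ^ 2) / (A * (t + 1))) by (field; lra).
  assert (0 <= ((t + 1) * x ^ 2 - (t + 1) * A * x + A ^ 2) / (A * (t + 1)))
    by (apply Rdiv_le_0_compat; nra).
  lra.
Qed.

Lemma gap_decay (delta : nat -> R) (B : R) (T : nat) : 0 < B ->
  (forall t, (t < T)%nat -> exists M, 0 <= M /\
     delta (S t) <= delta t - M ^ 2 / 4 /\ delta t <= B * M) ->
  forall t, (1 <= t <= T)%nat -> delta t <= 4 * B ^ 2 / INR t.
Proof.
  intros HB Hstep. induction t as [|t IH]; intros Ht; [lia|].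
  destruct (Hstep t ltac:(lia)) as [M [HM [Hdec Hgap]]].
  destruct t as [|t].
  - simpl INR. replace (4 * B ^ 2 / 1) with (4 * B ^ 2) by field.
    pose proof (pow2_ge_0 (M - 2 * B)). nra.
  - specialize (IH ltac:(lia)).
    destruct (Rle_dec 0 (delta (S t))) as [Hpos|Hneg].
    + set (A := 4 * B ^ 2) in *.
      assert (HA : 0 < A) by (unfold A; nra).
      assert (Hsq : delta (S t) ^ 2 / A <= M ^ 2 / 4).
      { apply Rle_div_l; [exact HA|]. unfold A.
        assert (delta (S t) ^ 2 <= (B * M) ^ 2) by (apply pow_incr; lra). nra. }
      pose proof (quad_step A (delta (S t)) (INR (S t)) HA) as Q.
      rewrite (S_INR (S t)).
      assert (1 <= INR (S t)) by (rewrite S_INR; pose proof (pos_INR t); lra).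
      specialize (Q ltac:(lra) (conj Hpos IH)). lra.
    + assert (0 <= 4 * B ^ 2 / INR (S (S t)))
        by (apply Rdiv_le_0_compat; [nra | apply lt_0_INR; lia]).
      pose proof (pow2_ge_0 M). lra.
Qed.

Lemma ceil_nat_ge x : 0 <= x -> x <= INR (ceil_nat x).
Proof.
  intros Hx. unfold ceil_nat. destruct (base_Int_part (- x)) as [H1 H2].
  rewrite INR_IZR_INZ, Z2Nat.id; [rewrite opp_IZR; lra|].
  apply le_IZR. rewrite opp_IZR. lra.
Qed.

Lemma ceil_nat_0 : ceil_nat 0 = 0%nat.
Proof.
  unfold ceil_nat, Int_part. rewrite Ropp_0, <- (tech_up 0 1); [reflexivity | lra | lra].
Qed.

Lemma ceil_rate A eps : 0 < A -> 0 < eps ->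
  (1 <= ceil_nat (A / eps))%nat /\ A / INR (ceil_nat (A / eps)) <= eps.
Proof.
  intros HA Heps.
  assert (HAe : 0 < A / eps) by (apply Rdiv_lt_0_compat; assumption).
  pose proof (ceil_nat_ge (A / eps) ltac:(lra)) as HT.
  assert (HT1 : (1 <= ceil_nat (A / eps))%nat)
    by (destruct (ceil_nat (A / eps)); [simpl in HT; lra | lia]).
  split; [exact HT1|].
  apply Rle_div_l in HT; [|exact Heps].
  apply Rle_div_l; [apply lt_0_INR; lia | lra].
Qed.

Lemma supported_sparsity k d rs t V : supported_on rs t V -> (norm_inf0 k d V <= t)%nat.
Proof.
  intros Hsup. unfold norm_inf0.
  replace t with (length (map rs (seq 1 t))) by (rewrite length_map, length_seq; reflexivity).
  apply NoDup_incl_length; [apply NoDup_filter, seq_NoDup|].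
  intros i Hi. apply filter_In in Hi as [_ Hi].
  apply existsb_exists in Hi as [j [_ Hj]].
  destruct (classic (in_I rs t i)) as [[s [Hs1 [Hs2 <-]]]|HI].
  - apply in_map, in_seq. lia.
  - rewrite (Hsup j i HI) in Hj. destruct (Req_EM_T 0 0); congruence.
Qed.

Lemma norm_inf0_zero k d V :
  norm_inf0 k d V = 0%nat -> forall j i, (j < k)%nat -> (i < d)%nat -> V j i = 0.
Proof.
  intros H j i Hj Hi. apply (col_nonzero_false k V i); [|exact Hj].
  destruct (col_nonzero k V i) eqn:E; [exfalso|reflexivity].
  assert (Hin : In i (filter (col_nonzero k V) (seq 0 d))) by (apply filter_In; split; [apply in_seq; lia | exact E]).
  unfold norm_inf0 in H. destruct (filter _ _); [contradiction | discriminate].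
Qed.

Section ShareBoostRun.
Variables (k d : nat) (data : list example) (T : nat) (Ws : nat -> mat) (rs : nat -> nat).
Hypothesis run : shareboost_run k d data T Ws rs.

Lemma run_supported t : (t <= T)%nat -> supported_on rs t (Ws t).
Proof.
  destruct run as [Hinit Hstep]. intros Ht.
  destruct t as [|t]; [intros j i _; apply Hinit|].
  apply (Hstep (S t)); lia.
Qed.

Lemma run_sparsity : (norm_inf0 k d (Ws T) <= T)%nat.
Proof. apply (supported_sparsity k d rs), run_supported. lia. Qed.

Hypothesis k_pos : (0 < k)%nat.
Hypothesis HS : forall e, In e data ->
  (snd e < k)%nat /\ forall i, (i < d)%nat -> -1 <= fst e i <= 1.

(* Before each iteration, the gradient vanishes on the columns of the
   current iterate: W_0 = 0, and later iterates are minimizers on I_t. *)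
Lemma run_gradient_orth t G : (t < T)%nat -> is_gradient k d (Lrisk k d data) (Ws t) G ->
  forall j i, (j < k)%nat -> (i < d)%nat -> Ws t j i = 0 \/ G j i = 0.
Proof.
  destruct run as [Hinit Hstep]. intros Ht HG j i Hj Hi.
  destruct (classic (in_I rs t i)) as [HI|HI]; [right | left; now apply run_supported; [lia|]].
  destruct t as [|t]; [exfalso; exact (in_I_0 rs i HI)|].
  destruct (Hstep (S t) ltac:(lia) ltac:(lia)) as [_ [_ [Hsup Hmin]]].
  exact (minimizer_gradient_zero k d data k_pos HS _ G rs _ HG Hsup Hmin j i Hj Hi HI).
Qed.

Variables (c : R) (Wstar : mat).
Hypothesis c_pos : 0 < c.
Hypothesis Wstar_bound : forall j i, (j < k)%nat -> (i < d)%nat -> -c <= Wstar j i <= c.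

Lemma run_step t : (t < T)%nat -> exists M, 0 <= M /\
  Lrisk k d data (Ws (S t)) <= Lrisk k d data (Ws t) - M ^ 2 / 4 /\
  Lrisk k d data (Ws t) - Lrisk k d data Wstar <= INR (norm_inf0 k d Wstar) * c * M.
Proof.
  destruct run as [_ Hstep]. intros Ht.
  destruct (Hstep (S t) ltac:(lia) ltac:(lia)) as [Hrr [[G [HG Hmax]] [Hsup Hmin]]].
  replace (S t - 1)%nat with t in HG by lia.
  destruct (column_progress k d data k_pos HS (Ws t) G (rs (S t)) HG Hrr) as [D [Hoff Hprog]].
  set (M := col_l1 k G (rs (S t))) in *.
  exists M. split; [|split].
  - unfold M, col_l1. rewrite sumR_sumL. apply sumL_nonneg. intros; apply Rabs_pos.
  - assert (Hstay : supported_on rs (S t) (mline (Ws t) D (M / 2))).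
    { apply supported_mline.
      - intros a b Hb. apply (run_supported t); [lia|]. intros HI. apply Hb, in_I_S, HI.
      - intros a b Hb. apply Hoff. intros ->. apply Hb, in_I_new. }
    pose proof (Hmin _ Hstay). lra.
  - rewrite Rmult_assoc.
    apply (suboptimality_gap k d data k_pos HS (Ws t) G); [exact HG | lra | | | exact Hmax].
    + exact (run_gradient_orth t G Ht HG).
    + intros j i Hj Hi. apply Rabs_le, Wstar_bound; auto.
Qed.

Lemma run_rate : (0 < norm_inf0 k d Wstar)%nat -> forall t, (1 <= t <= T)%nat ->
  Lrisk k d data (Ws t) - Lrisk k d data Wstar
  <= 4 * INR (norm_inf0 k d Wstar) ^ 2 * c ^ 2 / INR t.
Proof.
  intros Hr t Ht.
  replace (4 * INR (norm_inf0 k d Wstar) ^ 2 * c ^ 2)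
    with (4 * (INR (norm_inf0 k d Wstar) * c) ^ 2) by ring.
  revert t Ht. apply (gap_decay (fun t => Lrisk k d data (Ws t) - Lrisk k d data Wstar)).
  - apply Rmult_lt_0_compat; [apply lt_0_INR|]; assumption.
  - intros t Ht. destruct (run_step t Ht) as [M [HM [Hdec Hgap]]].
    exists M. repeat split; lra.
Qed.

Lemma run_start_optimal : norm_inf0 k d Wstar = 0%nat ->
  Lrisk k d data (Ws 0%nat) = Lrisk k d data Wstar.
Proof.
  intros Hr. apply Lrisk_block; [exact k_pos | intros e He; apply (HS e He) |].
  intros a b Ha Hb. rewrite (proj1 run), (norm_inf0_zero k d Wstar); auto.
Qed.
End ShareBoostRun.

Theorem corollary1 (k d : nat) (S : list example) (eps c : R) (r : nat)
  (HS : forall e, In e S ->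
          (snd e < k)%nat /\
          forall i, (i < d)%nat -> -1 <= fst e i <= 1)
  (Heps : 0 < eps) (Hc : 0 < c)
  (Wstar : mat)
  (HWloss : Lrisk k d S Wstar <= eps)
  (HWbound : forall j i, (j < k)%nat -> (i < d)%nat -> -c <= Wstar j i <= c)
  (HWsparse : norm_inf0 k d Wstar = r)
  (Ws : nat -> mat) (rs : nat -> nat)
  (Hrun : shareboost_run k d S
            (ceil_nat (4 * INR r ^ 2 * c ^ 2 / eps)) Ws rs) :
  let T := ceil_nat (4 * INR r ^ 2 * c ^ 2 / eps) in
  Lrisk k d S (Ws T) <= 2 * eps /\ (norm_inf0 k d (Ws T) <= T)%nat.
Proof.
  intros T. split; [|exact (run_sparsity k d S T Ws rs Hrun)].
  destruct S as [|e0 S0] eqn:HSeq; [unfold Lrisk; simpl; lra|]. rewrite <- HSeq in *.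
  assert (Hk : (0 < k)%nat)
    by (pose proof (proj1 (HS e0 ltac:(rewrite HSeq; left; reflexivity))); lia).
  destruct (Nat.eq_dec r 0) as [Hr0|Hr0].
  - (* Then T = 0 and the initial iterate 0 is as good as Wstar. *)
    assert (HT0 : T = 0%nat).
    { unfold T. rewrite Hr0. replace (4 * INR 0 ^ 2 * c ^ 2 / eps) with 0 by (simpl; field; lra).
      exact ceil_nat_0. }
    rewrite HT0, (run_start_optimal k d S T Ws rs Hrun Hk HS Wstar); [lra | congruence].
  - (* Otherwise the rate 4 r^2 c^2 / T is at most eps by the choice of T. *)
    assert (HA : 0 < 4 * INR r ^ 2 * c ^ 2).
    { pose proof (pow_lt (INR r) 2 (lt_0_INR r ltac:(lia))). pose proof (pow_lt c 2 Hc). nra. }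
    destruct (ceil_rate _ _ HA Heps) as [HT1 HTrate]. fold T in HT1, HTrate.
    pose proof (run_rate k d S T Ws rs Hrun Hk HS c Wstar Hc HWbound ltac:(lia) T
                  ltac:(lia)) as Hrate.
    rewrite HWsparse in Hrate. lra.
Qed.
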